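(* For all natural numbers $a,b$: - $O_{a+b}\prec E_{a+b}$; - $E_aO_b\prec E_{a+b}$; - $O_aE_b\prec E_{a+b}$; - $O_aO_b\prec O_{a+b}\prec E_aE_b$.
   Context: For natural numbers $c$, $E_c,O_c\in\mathbb{R}[x]$ are defined by $(u+1)^c=E_c(u^2)+uO_c(u^2)$. Relation $\prec$: for $A,B\in\mathbb{R}[x]$ with only real zeros, with zeros $\xi_1\le\cdots\le\xi_a$ of $A$ and $\theta_1\le\cdots\le\theta_b$ of $B$, $A\prec B$ means one of the following: - $\deg B=\deg A+1$ and $\theta_1\le\xi_1\le\theta_2\le\cdots\le\xi_a\le\theta_{a+1}$; - $\deg A=\deg B$ and $\xi_1\le\theta_1\le\cdots\le\xi_a\le\theta_a$. By convention $A\prec0$ and $0\prec A$ for any polynomial $A$ with only real zeros. *)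

From HB Require Import structures.
From mathcomp Require Import all_boot all_order all_algebra.
From mathcomp Require Import reals.
Set Implicit Arguments. Unset Strict Implicit. Unset Printing Implicit Defensive.
Import Order.TTheory GRing.Theory Num.Theory.
Local Open Scope ring_scope.

Section Defs.
Variable R : realType.

(* (u+1)^c = E_c(u^2) + u O_c(u^2): E_c / O_c are the even / odd parts of
   (X+1)^c, in the sense of MathComp's even_poly / odd_poly, which satisfy
   p = even_poly p \Po 'X^2 + 'X * (odd_poly p \Po 'X^2). *)
Definition Epoly (c : nat) : {poly R} := even_poly (('X + 1) ^+ c).
Definition Opoly (c : nat) : {poly R} := odd_poly (('X + 1) ^+ c).

Definition zeros_of (p : {poly R}) (s : seq R) : Prop :=
  sorted <=%R s /\ p = lead_coef p *: \prod_(x <- s) ('X - x%:P).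

Definition real_rooted (p : {poly R}) : Prop := exists s, zeros_of p s.

(* The interlacing relation A ≺ B of the paper, with the convention that
   A ≺ 0 and 0 ≺ A for every real-rooted A. *)
Definition prec (A B : {poly R}) : Prop :=
  real_rooted A /\ real_rooted B /\
  (A = 0 \/ B = 0 \/
   exists xi theta : seq R, zeros_of A xi /\ zeros_of B theta /\
   let a := size xi in
   ((size theta = a.+1 /\
       forall i, (i < a)%N ->
         nth 0 theta i <= nth 0 xi i /\ nth 0 xi i <= nth 0 theta i.+1)
    \/
    (size theta = a /\
       (forall i, (i < a)%N -> nth 0 xi i <= nth 0 theta i) /\
       (forall i, (i.+1 < a)%N -> nth 0 theta i <= nth 0 xi i.+1)))).

End Defs.

(* Substituting u = i tan x in (u + 1)^c gives
     cos^c x * E_c(-tan^2 x) = cos (c x),   cos^c x * tan x * O_c(-tan^2 x) = sin (c x),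
   so E_c and O_c split with the simple zeros node c k = -tan^2 (k pi / 2c), 0 <= k < c,
   k odd for E_c and k even and positive for O_c.  These points decrease in k, and
   node c k <= y iff k >= ceil (c t) for a threshold t = t(y) in [0, 1] that does not
   depend on c.  Hence the number of zeros <= y of each polynomial is the number of odd,
   resp. positive even, integers in [ceil (c t), c), and because
   ceil (a t) + ceil (b t) - ceil ((a + b) t) is 0 or 1, the counting functions of the
   two sides of each relation differ by at most one in the right direction, which for
   sorted zero lists is exactly interlacing. *)
From HB Require Import structures.
From mathcomp Require Import all_boot all_order all_algebra.
From mathcomp Require Import reals trigo.
From mathcomp Require Import ring lra zify.
Import Order.TTheory GRing.Theory Num.Theory.
Set Implicit Arguments. Unset Strict Implicit. Unset Printing Implicit Defensive.
Local Open Scope ring_scope.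

Lemma all_roots_prod_XsubC_leq (F : fieldType) (p : {poly F}) (rs : seq F) :
  p != 0 -> (size p <= (size rs).+1)%N -> all (root p) rs -> uniq rs ->
  p = lead_coef p *: \prod_(z <- rs) ('X - z%:P).
Proof.
move=> p0 sp rootp urs; apply: all_roots_prod_XsubC; rewrite ?uniq_rootsE //.
by apply/eqP; rewrite eqn_leq sp max_poly_roots.
Qed.

Lemma size_exp_Xadd1 (R : nzRingType) c : size (('X + 1) ^+ c : {poly R}) = c.+1.
Proof. by rewrite -[1]opprK -polyCN size_exp_XsubC. Qed.

Lemma count_leq_iota m s n : count (leq m) (iota s n) = (s + n - maxn s m)%N.
Proof. by elim: n s => [|n IHn] s /=; [lia | rewrite IHn; case: leqP; lia]. Qed.

Section Ceiln.
Variable R : archiRealDomainType.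
Implicit Types x y : R.

Definition ceiln x : nat := `|Num.ceil x|%N.

Lemma ceiln_le_nat x k : 0 <= x -> (ceiln x <= k)%N = (x <= k%:R).
Proof.
move=> x0; rewrite -lez_nat gez0_abs ?ceil_le_int //.
by rewrite ceil_ge0 (lt_le_trans _ x0) // ltrN10.
Qed.

Lemma ceiln_ge x : 0 <= x -> x <= (ceiln x)%:R.
Proof. by move=> x0; rewrite -ceiln_le_nat. Qed.

Lemma ceiln_gtB1 x : 0 <= x -> (ceiln x)%:R - 1 < x.
Proof.
move=> x0; case: (ceiln x) (ceiln_le_nat (ceiln x).-1 x0) => [_|k].
  by rewrite sub0r (lt_le_trans _ x0) ?ltrN10.
by rewrite ltnn -natr1 addrK => /esym/negbT; rewrite -ltNge.
Qed.

Lemma le_ceiln x y : 0 <= x -> x <= y -> (ceiln x <= ceiln y)%N.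
Proof.
move=> x0 xy; rewrite ceiln_le_nat // (le_trans xy) // ceiln_ge //.
exact: le_trans xy.
Qed.

Lemma ceilnD_le x y : 0 <= x -> 0 <= y -> (ceiln (x + y) <= ceiln x + ceiln y)%N.
Proof. by move=> x0 y0; rewrite ceiln_le_nat ?addr_ge0 // natrD lerD ?ceiln_ge. Qed.

Lemma ceilnD_ge x y : 0 <= x -> 0 <= y -> (ceiln x + ceiln y <= (ceiln (x + y)).+1)%N.
Proof.
move=> x0 y0; rewrite leqNgt -(ler_nat R) natrD -!natr1.
have := ceiln_gtB1 x0; have := ceiln_gtB1 y0; have := ceiln_ge (addr_ge0 x0 y0).
rewrite -ltNge; lra.
Qed.

End Ceiln.

Section EvenOddZeros.
Variable R : realType.

Definition count_le (s : seq R) (y : R) : nat := count (fun x => x <= y) s.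

Lemma count_le_cat (s1 s2 : seq R) y :
  count_le (s1 ++ s2) y = (count_le s1 y + count_le s2 y)%N.
Proof. exact: count_cat. Qed.

Lemma count_le_sort (s : seq R) y : count_le (sort <=%R s) y = count_le s y.
Proof. exact: count_sort. Qed.

Lemma nth_le_count (s : seq R) i y : sorted <=%R s -> (i < size s)%N ->
  (nth 0 s i <= y) = (i < count_le s y)%N.
Proof.
elim: s i => [//|x s IHs] i /= xs; have xmin := order_path_min le_trans xs.
have [xy|yx] := leP x y.
  case: i => [|i] /= ilt; first by rewrite xy.
  by rewrite add1n ltnS IHs ?(path_sorted xs).
have -> : count_le s y = 0%N.
  apply/eqP; rewrite -leqn0 leqNgt -has_count; apply/hasPn => z /(allP xmin) xz.
  by rewrite -ltNge (lt_le_trans yx).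
move=> ilt; rewrite leNgt (lt_le_trans yx) //.
by case: i ilt => [|i] //=; rewrite ltnS => ilt; apply/(allP xmin)/mem_nth.
Qed.

Lemma ltn_count_nth (s : seq R) i : sorted <=%R s -> (i < size s)%N ->
  (i < count_le s (nth 0%R s i))%N.
Proof. by move=> ss si; rewrite -nth_le_count. Qed.

Lemma Epoly0 : Epoly R 0 = 1.
Proof. by rewrite /Epoly expr0 -polyC1 even_polyC. Qed.

Lemma Opoly0 : Opoly R 0 = 0.
Proof. by rewrite /Opoly expr0 -polyC1 odd_polyC. Qed.

Lemma Epoly_succ c : Epoly R c.+1 = Epoly R c + 'X * Opoly R c.
Proof.
by rewrite /Epoly /Opoly exprSr mulrDr mulr1 even_polyD even_polyMX addrC mulrC.
Qed.

Lemma Opoly_succ c : Opoly R c.+1 = Epoly R c + Opoly R c.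
Proof. by rewrite /Epoly /Opoly exprSr mulrDr mulr1 odd_polyD odd_polyMX. Qed.

Lemma Epoly_horner0 c : (Epoly R c).[0] = 1.
Proof.
elim: c => [|c IHc]; first by rewrite Epoly0 hornerC.
by rewrite Epoly_succ hornerD hornerM hornerX mul0r addr0.
Qed.

Lemma Opoly_horner0 c : (Opoly R c).[0] = c%:R.
Proof.
elim: c => [|c IHc]; first by rewrite Opoly0 horner0.
by rewrite Opoly_succ hornerD Epoly_horner0 IHc addrC natr1.
Qed.

Lemma horner_EOpoly_tan c x : cos x != 0 ->
  (Epoly R c).[- tan x ^+ 2] * cos x ^+ c = cos (c%:R * x) /\
  (Opoly R c).[- tan x ^+ 2] * cos x ^+ c * tan x = sin (c%:R * x).
Proof.
move=> cx0; elim: c => [|c [IHE IHO]].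
  by rewrite Epoly0 Opoly0 hornerC horner0 !mul0r cos0 sin0 !mulr1.
rewrite Epoly_succ Opoly_succ hornerD hornerM hornerX hornerD.
rewrite -natr1 (mulrDl _ _ x) mul1r cosD sinD -IHE -IHO [cos x ^+ c.+1]exprSr.
set e := (Epoly R c).[_]; set o := (Opoly R c).[_].
by rewrite /tan; split; field.
Qed.

Lemma sin_natr_pi (j : nat) : sin (j%:R * pi) = 0 :> R.
Proof.
by rewrite mulr_natl -[_ *+ _]add0r alternatingn; [rewrite sin0 mulr0 | exact: sinDpi].
Qed.

Lemma pihalf_gt0 : 0 < pi / 2 :> R.
Proof. by rewrite divr_gt0 ?pi_gt0. Qed.

Definition node_angle (c k : nat) : R := k%:R * (pi / 2) / c%:R.

Definition node (c k : nat) : R := - tan (node_angle c k) ^+ 2.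

Lemma mulr_node_angle c k : (0 < c)%N -> c%:R * node_angle c k = k%:R * (pi / 2).
Proof. by move=> c0; rewrite /node_angle mulrC divfK // pnatr_eq0 -lt0n. Qed.

Lemma node_angle_itv c k : (k < c)%N -> 0 <= node_angle c k < pi / 2.
Proof.
move=> kc; have c0 : 0 < c%:R :> R by rewrite ltr0n; lia.
have kc1 : k%:R / c%:R < 1 :> R by rewrite ltr_pdivrMr // mul1r ltr_nat.
have P0 := pihalf_gt0.
rewrite /node_angle mulrAC mulr_ge0 ?(ltW P0) ?divr_ge0 //=.
by rewrite -[X in _ < X]mul1r ltr_pM2r.
Qed.

Lemma node_angle_in_tan_dom c k : (k < c)%N ->
  node_angle c k \in `](- (pi / 2)), (pi / 2)[.
Proof.
move=> /node_angle_itv /andP[t0 t1]; rewrite in_itv /= t1 andbT.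
by apply: lt_le_trans t0; rewrite oppr_lt0 pihalf_gt0.
Qed.

Lemma cos_node_angle_gt0 c k : (k < c)%N -> 0 < cos (node_angle c k).
Proof. by move=> /node_angle_in_tan_dom; rewrite in_itv; apply: cos_gt0_pihalf. Qed.

Lemma tan_node_angle_ge0 c k : (k < c)%N -> 0 <= tan (node_angle c k).
Proof.
move=> kc; have /andP[t0 t1] := node_angle_itv kc.
rewrite /tan divr_ge0 ?(ltW (cos_node_angle_gt0 kc)) // sin_ge0_pi // t0 /=.
by apply: le_trans (ltW t1) _; have := pi_gt0 R; lra.
Qed.

Lemma node_inj c k1 k2 : (k1 < c)%N -> (k2 < c)%N -> node c k1 = node c k2 -> k1 = k2.
Proof.
move=> k1c k2c /eqP; rewrite /node eqr_opp eqrXn2 ?tan_node_angle_ge0 // => /eqP.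
move=> /(tan_inj (node_angle_in_tan_dom k1c) (node_angle_in_tan_dom k2c)).
move=> /(congr1 (fun t => c%:R * t)); rewrite !mulr_node_angle; try lia.
by move=> /(mulIf (lt0r_neq0 pihalf_gt0))/eqP; rewrite eqr_nat => /eqP.
Qed.

Lemma node_le_angle c k y : (k < c)%N ->
  (node c k <= y) = (atan (Num.sqrt (- y)) <= node_angle c k).
Proof.
move=> kc; have /andP[t0 _] := node_angle_itv kc.
have [y0|y0] := leP 0 y.
  by rewrite ler0_sqrtr ?oppr_le0 // atan0 t0 (le_trans _ y0) // oppr_le0 sqr_ge0.
have sq0 : 0 <= Num.sqrt (- y) := sqrtr_ge0 _.
have sqE : Num.sqrt (- y) ^+ 2 = - y by rewrite sqr_sqrtr // oppr_ge0 ltW.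
rewrite lerNl -{1}sqE ler_pXn2r ?nnegrE ?tan_node_angle_ge0 //.
rewrite -{1}(atanK (Num.sqrt (- y))) !leNgt ltr_tan ?node_angle_in_tan_dom //.
by rewrite in_itv /= atan_gtNpi2 atan_ltpi2.
Qed.

Definition node_threshold (y : R) : R := atan (Num.sqrt (- y)) / (pi / 2).

Lemma node_threshold_ge0 y : 0 <= node_threshold y.
Proof.
by rewrite divr_ge0 ?(ltW pihalf_gt0) // -(atan0 R) le_atan ?sqrtr_ge0.
Qed.

Lemma node_threshold_le1 y : node_threshold y <= 1.
Proof. by rewrite ler_pdivrMr ?pihalf_gt0 // mul1r ltW ?atan_ltpi2. Qed.

Definition node_rank (y : R) (c : nat) : nat := ceiln (c%:R * node_threshold y).

Lemma node_rank_arg_ge0 y c : 0 <= c%:R * node_threshold y.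
Proof. by rewrite mulr_ge0 ?node_threshold_ge0. Qed.

Lemma node_le_rank c k y : (k < c)%N -> (node c k <= y) = (node_rank y c <= k)%N.
Proof.
move=> kc; have c0 : (0 < c)%N by lia.
rewrite node_le_angle // ceiln_le_nat ?node_rank_arg_ge0 //.
rewrite -(ler_pM2l (_ : 0 < c%:R)) ?ltr0n // mulr_node_angle //.
by rewrite /node_threshold [in RHS]mulrA ler_pdivrMr ?pihalf_gt0.
Qed.

Lemma node_rank_le y c : (node_rank y c <= c)%N.
Proof.
by rewrite ceiln_le_nat ?node_rank_arg_ge0 // ler_piMr ?node_threshold_le1.
Qed.

Lemma le_node_rank y a b : (a <= b)%N -> (node_rank y a <= node_rank y b)%N.
Proof.
move=> ab; rewrite le_ceiln ?node_rank_arg_ge0 //.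
by rewrite ler_wpM2r ?node_threshold_ge0 ?ler_nat.
Qed.

Lemma node_rank_bounds y a b : let r := node_rank y in
  [/\ (r a <= a)%N, (r b <= b)%N, (r a <= r (a + b))%N, (r b <= r (a + b))%N &
      (r (a + b) <= r a + r b <= (r (a + b)).+1)%N].
Proof.
split; rewrite ?node_rank_le ?le_node_rank ?leq_addr ?leq_addl //.
rewrite /node_rank natrD mulrDl.
by rewrite ceilnD_le ?ceilnD_ge ?node_rank_arg_ge0.
Qed.

Lemma root_Epoly c j : (j.*2.+1 < c)%N -> root (Epoly R c) (node c j.*2.+1).
Proof.
move=> kc; have cos0 := lt0r_neq0 (cos_node_angle_gt0 kc).
have [+ _] := horner_EOpoly_tan c cos0; rewrite mulr_node_angle; last by lia.
have -> : (j.*2.+1)%:R * (pi / 2) = j%:R * pi + pi / 2 :> R.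
  by rewrite -addn1 -muln2 natrD natrM; field.
rewrite cosDpihalf sin_natr_pi oppr0 => /eqP.
by rewrite mulf_eq0 expf_eq0 (negbTE cos0) andbF orbF.
Qed.

Lemma root_Opoly c j : (0 < j)%N -> (j.*2 < c)%N -> root (Opoly R c) (node c j.*2).
Proof.
move=> j0 kc; have cos0 := lt0r_neq0 (cos_node_angle_gt0 kc).
have tan0 : tan (node_angle c j.*2) != 0.
  apply/eqP => tan_eq0; suff : j.*2 = 0%N by lia.
  apply: (@node_inj c); [exact: kc | lia |].
  by rewrite /node tan_eq0 /node_angle !mul0r tan0.
have [_ +] := horner_EOpoly_tan c cos0; rewrite mulr_node_angle; last by lia.
have -> : (j.*2)%:R * (pi / 2) = j%:R * pi :> R by rewrite -muln2 natrM; field.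
rewrite sin_natr_pi => /eqP.
by rewrite mulf_eq0 (negbTE tan0) orbF mulf_eq0 expf_eq0 (negbTE cos0) andbF orbF.
Qed.

Definition Ezeros c : seq R := [seq node c j.*2.+1 | j <- iota 0 c./2].
Definition Ozeros c : seq R := [seq node c j.*2 | j <- iota 1 c.-1./2].

Lemma size_Ezeros c : size (Ezeros c) = c./2.
Proof. by rewrite size_map size_iota. Qed.

Lemma size_Ozeros c : size (Ozeros c) = c.-1./2.
Proof. by rewrite size_map size_iota. Qed.

Lemma zeros_of_sort (p : {poly R}) s :
  p = lead_coef p *: \prod_(z <- s) ('X - z%:P) -> zeros_of p (sort <=%R s).
Proof.
move=> ps; split; first exact/sort_sorted/le_total.
by rewrite (perm_big s) ?perm_sort.
Qed.

Lemma zeros_of_mul (A B : {poly R}) xa xb : zeros_of A xa -> zeros_of B xb ->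
  zeros_of (A * B) (sort <=%R (xa ++ xb)).
Proof.
move=> [_ eA] [_ eB]; apply: zeros_of_sort.
by rewrite big_cat lead_coefM {1}eA {1}eB -scalerAl -scalerAr scalerA.
Qed.

Lemma Epoly_zeros c : zeros_of (Epoly R c) (sort <=%R (Ezeros c)).
Proof.
apply/zeros_of_sort/all_roots_prod_XsubC_leq.
- apply/eqP => E0; have := Epoly_horner0 c.
  by rewrite E0 horner0 => /eqP; rewrite eq_sym oner_eq0.
- rewrite size_Ezeros (leq_trans (size_even_poly _)) // size_exp_Xadd1; lia.
- apply/allP => _ /mapP[j + ->]; rewrite mem_iota => /andP[_ jc].
  by apply: root_Epoly; lia.
- rewrite map_inj_in_uniq ?iota_uniq // => i j.
  rewrite !mem_iota => /andP[_ ic] /andP[_ jc] /node_inj ij.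
  by have := ij (_ : i.*2.+1 < c)%N (_ : j.*2.+1 < c)%N; lia.
Qed.

Lemma Opoly_zeros c : zeros_of (Opoly R c) (sort <=%R (Ozeros c)).
Proof.
have [->|c0] := posnP c.
  by rewrite Opoly0; apply: zeros_of_sort; rewrite lead_coef0 scale0r.
apply/zeros_of_sort/all_roots_prod_XsubC_leq.
- apply/eqP => O0; have := Opoly_horner0 c.
  by rewrite O0 horner0 => /esym/eqP; rewrite pnatr_eq0 gtn_eqF.
- rewrite size_Ozeros (leq_trans (size_odd_poly _)) // size_exp_Xadd1; lia.
- apply/allP => _ /mapP[j + ->]; rewrite mem_iota => /andP[j0 jc].
  by apply: root_Opoly; lia.
- rewrite map_inj_in_uniq ?iota_uniq // => i j.
  rewrite !mem_iota => /andP[_ ic] /andP[_ jc] /node_inj ij.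
  by have := ij (_ : i.*2 < c)%N (_ : j.*2 < c)%N; lia.
Qed.

Lemma count_le_Ezeros c y : (count_le (Ezeros c) y + (node_rank y c)./2 = c./2)%N.
Proof.
have rc := node_rank_le y c.
rewrite /count_le count_map (@eq_in_count _ _ (leq (node_rank y c)./2)).
  by rewrite count_leq_iota; lia.
move=> j; rewrite mem_iota => /andP[_ jc].
by rewrite [LHS]/= node_le_rank; [apply/idP/idP; lia | lia].
Qed.

Lemma count_le_Ozeros c y :
  (count_le (Ozeros c) y + (node_rank y c).-1./2 = c.-1./2)%N.
Proof.
have rc := node_rank_le y c.
rewrite /count_le count_map (@eq_in_count _ _ (leq (node_rank y c).+1./2)).
  by rewrite count_leq_iota; lia.
move=> j; rewrite mem_iota => /andP[j0 jc].
by rewrite [LHS]/= node_le_rank; [apply/idP/idP; lia | lia].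
Qed.

Lemma prec_of_count_le (A B : {poly R}) xi th : zeros_of A xi -> zeros_of B th ->
  (forall y, let a := count_le xi y in let b := count_le th y in
     (size th = (size xi).+1 /\ (a <= b <= a.+1)%N) \/
     (size th = size xi /\ (b <= a <= b.+1)%N)) ->
  prec A B.
Proof.
move=> zA zB cnt; split; first by exists xi.
split; first by exists th.
right; right; exists xi, th; split=> //; split=> //.
have [xs _] := zA; have [ts _] := zB.
have [ths|ths] := eqVneq (size th) (size xi).+1.
  left; split=> // i ilt; split.
    rewrite (nth_le_count _ ts); last by rewrite ths; exact: leqW.
    have := ltn_count_nth xs ilt.
    by case: (cnt (nth 0 xi i)) => [[_ /andP[? ?]] | [? _]]; lia.
  rewrite (nth_le_count _ xs) //.
  have := @ltn_count_nth th i.+1 ts; rewrite ths ltnS => /(_ ilt).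
  by case: (cnt (nth 0 th i.+1)) => [[_ /andP[? ?]] | [? _]]; lia.
have eq_size : size th = size xi by case: (cnt 0) => [[? _] | [? _]]; lia.
right; split=> //; split=> i ilt.
  rewrite (nth_le_count _ xs) //.
  have := @ltn_count_nth th i ts; rewrite eq_size => /(_ ilt).
  by case: (cnt (nth 0 th i)) => [[? _] | [_ /andP[? ?]]]; lia.
rewrite (nth_le_count _ ts); last by rewrite eq_size (ltn_trans _ ilt).
have := ltn_count_nth xs ilt.
by case: (cnt (nth 0 xi i.+1)) => [[? _] | [_ /andP[? ?]]]; lia.
Qed.

Lemma prec_Opoly_Epoly n : prec (Opoly R n) (Epoly R n).
Proof.
apply: prec_of_count_le (Opoly_zeros n) (Epoly_zeros n) _ => y.
rewrite !(size_sort, size_Ezeros, size_Ozeros, count_le_sort).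
have := count_le_Ozeros n y; have := count_le_Ezeros n y; lia.
Qed.

Lemma prec_EOpoly_Epoly a b : prec (Epoly R a * Opoly R b) (Epoly R (a + b)).
Proof.
apply: prec_of_count_le (zeros_of_mul (Epoly_zeros a) (Opoly_zeros b))
  (Epoly_zeros (a + b)) _ => y.
rewrite !(size_sort, size_cat, size_Ezeros, size_Ozeros, count_le_sort, count_le_cat).
have := count_le_Ezeros a y; have := count_le_Ozeros b y.
have := count_le_Ezeros (a + b) y; case: (node_rank_bounds y a b); lia.
Qed.

Lemma prec_OEpoly_Epoly a b : prec (Opoly R a * Epoly R b) (Epoly R (a + b)).
Proof.
apply: prec_of_count_le (zeros_of_mul (Opoly_zeros a) (Epoly_zeros b))
  (Epoly_zeros (a + b)) _ => y.
rewrite !(size_sort, size_cat, size_Ezeros, size_Ozeros, count_le_sort, count_le_cat).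
have := count_le_Ozeros a y; have := count_le_Ezeros b y.
have := count_le_Ezeros (a + b) y; case: (node_rank_bounds y a b); lia.
Qed.

Lemma prec_OOpoly_Opoly a b : prec (Opoly R a * Opoly R b) (Opoly R (a + b)).
Proof.
apply: prec_of_count_le (zeros_of_mul (Opoly_zeros a) (Opoly_zeros b))
  (Opoly_zeros (a + b)) _ => y.
rewrite !(size_sort, size_cat, size_Ozeros, count_le_sort, count_le_cat).
have := count_le_Ozeros a y; have := count_le_Ozeros b y.
have := count_le_Ozeros (a + b) y; case: (node_rank_bounds y a b); lia.
Qed.

Lemma prec_Opoly_EEpoly a b : prec (Opoly R (a + b)) (Epoly R a * Epoly R b).
Proof.
apply: prec_of_count_le (Opoly_zeros (a + b))
  (zeros_of_mul (Epoly_zeros a) (Epoly_zeros b)) _ => y.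
rewrite !(size_sort, size_cat, size_Ezeros, size_Ozeros, count_le_sort, count_le_cat).
have := count_le_Ezeros a y; have := count_le_Ezeros b y.
have := count_le_Ozeros (a + b) y; case: (node_rank_bounds y a b); lia.
Qed.

End EvenOddZeros.

Theorem lemma3p1 (R : realType) (a b : nat) :
  prec (Opoly R (a + b)) (Epoly R (a + b)) /\
  prec (Epoly R a * Opoly R b) (Epoly R (a + b)) /\
  prec (Opoly R a * Epoly R b) (Epoly R (a + b)) /\
  prec (Opoly R a * Opoly R b) (Opoly R (a + b)) /\
  prec (Opoly R (a + b)) (Epoly R a * Epoly R b).
Proof.
split; first exact: prec_Opoly_Epoly.
split; first exact: prec_EOpoly_Epoly.
split; first exact: prec_OEpoly_Epoly.
split; first exact: prec_OOpoly_Opoly.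
exact: prec_Opoly_EEpoly.
Qed.
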